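(* Let $K$ be a simplex in a topological vector space $F$ and let $Y$ be a nonempty convex subset of a topological vector space $E$. Let $T:K\to 2^{Y}$ be a weakly naturally quasiconvex correspondence. Then $T$ has a continuous selection on $K$, i.e. there is a continuous map $f:K\to Y$ with $f(x)\in T(x)$ for every $x\in K$.
   Context: A simplex is the convex hull of a finite affinely independent set. $\Delta_{n-1}=\{(\lambda_1,\dots,\lambda_n)\in\mathbb{R}^n:\sum_{i=1}^n\lambda_i=1,\ \lambda_i\ge 0\}$. Weakly naturally quasiconvex (WNQ): let $X,Y$ be nonempty convex subsets of topological vector spaces. A correspondence $T:X\to 2^{Y}$ is weakly naturally quasiconvex if for each $n\in\mathbb{N}$ and each finite set $\{x_1,\dots,x_n\}\subset X$ there exist $y_i\in T(x_i)$ ($i=1,\dots,n$) and a bijection $g:\Delta_{n-1}\to\Delta_{n-1}$ (depending on $x_1,\dots,x_n$) of the form $g(\lambda_1,\dots,\lambda_n)=(g_1(\lambda_1),\dots,g_n(\lambda_n))$, where each $g_i:[0,1]\to[0,1]$ is continuous with $g_i(0)=0$ and $g_i(1)=1$, such that for every $(\lambda_1,\dots,\lambda_n)\in\Delta_{n-1}$ we have $\sum_{i=1}^n g_i(\lambda_i)y_i\in T\big(\sum_{i=1}^n\lambda_i x_i\big)$. *)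

From Stdlib Require Import Reals.
Open Scope R_scope.

Record TVS : Type := {
  tv :> Type;
  tzero : tv;
  tadd : tv -> tv -> tv;
  topp : tv -> tv;
  tscal : R -> tv -> tv;
  tadd_assoc : forall x y z, tadd x (tadd y z) = tadd (tadd x y) z;
  tadd_comm : forall x y, tadd x y = tadd y x;
  tadd_0 : forall x, tadd tzero x = x;
  tadd_opp : forall x, tadd (topp x) x = tzero;
  tscal_assoc : forall a b x, tscal a (tscal b x) = tscal (a * b) x;
  tscal_1 : forall x, tscal 1 x = x;
  tscal_distr_v : forall a x y, tscal a (tadd x y) = tadd (tscal a x) (tscal a y);
  tscal_distr_s : forall a b x, tscal (a + b) x = tadd (tscal a x) (tscal b x);
  topen : (tv -> Prop) -> Prop;
  topen_full : topen (fun _ => True);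
  topen_inter : forall U V, topen U -> topen V -> topen (fun x => U x /\ V x);
  topen_union : forall (I : Type) (U : I -> tv -> Prop),
      (forall i, topen (U i)) -> topen (fun x => exists i, U i x);
  tadd_cont : forall x y U, topen U -> U (tadd x y) ->
      exists V W, topen V /\ topen W /\ V x /\ W y /\
        (forall a b, V a -> W b -> U (tadd a b));
  tscal_cont : forall r x U, topen U -> U (tscal r x) ->
      exists eps, 0 < eps /\ exists V, topen V /\ V x /\
        (forall s z, Rabs (s - r) < eps -> V z -> U (tscal s z));
  thausdorff : forall x y, x <> y ->
      exists U V, topen U /\ topen V /\ U x /\ V y /\ (forall z, ~ (U z /\ V z))
}.

Arguments tzero {_}.
Arguments tadd {_}.
Arguments topp {_}.
Arguments tscal {_}.
Arguments topen {_}.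

Fixpoint sumR (n : nat) (a : nat -> R) : R :=
  match n with O => 0 | S m => sumR m a + a m end.

Fixpoint vsum {V : TVS} (n : nat) (w : nat -> V) : V :=
  match n with O => tzero | S m => tadd (vsum m w) (w m) end.

(* lam is in Delta_{n-1} (only the first n coordinates matter) *)
Definition in_Delta (n : nat) (lam : nat -> R) : Prop :=
  (forall i, (i < n)%nat -> 0 <= lam i) /\ sumR n lam = 1.

Definition convex {V : TVS} (X : V -> Prop) : Prop :=
  forall a b t, X a -> X b -> 0 <= t <= 1 ->
    X (tadd (tscal (1 - t) a) (tscal t b)).

Definition aff_indep {V : TVS} (n : nat) (v : nat -> V) : Prop :=
  forall c : nat -> R, sumR n c = 0 ->
    vsum n (fun i => tscal (c i) (v i)) = tzero ->
    forall i, (i < n)%nat -> c i = 0.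

Definition is_simplex {V : TVS} (K : V -> Prop) : Prop :=
  exists (n : nat) (v : nat -> V),
    (forall i j, (i < n)%nat -> (j < n)%nat -> v i = v j -> i = j) /\
    aff_indep n v /\
    (forall x, K x <-> exists lam, in_Delta n lam /\ x = vsum n (fun i => tscal (lam i) (v i))).

Definition cont_on_01 (h : R -> R) : Prop :=
  forall t, 0 <= t <= 1 -> forall eps, 0 < eps -> exists delta, 0 < delta /\
    forall s, 0 <= s <= 1 -> Rabs (s - t) < delta -> Rabs (h s - h t) < eps.

Definition admissible_g (n : nat) (g : nat -> R -> R) : Prop :=
  (forall i, (i < n)%nat ->
     cont_on_01 (g i) /\ (forall t, 0 <= t <= 1 -> 0 <= g i t <= 1) /\
     g i 0 = 0 /\ g i 1 = 1) /\
  (forall lam, in_Delta n lam -> in_Delta n (fun i => g i (lam i))) /\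
  (forall lam mu, in_Delta n lam -> in_Delta n mu ->
     (forall i, (i < n)%nat -> g i (lam i) = g i (mu i)) ->
     forall i, (i < n)%nat -> lam i = mu i) /\
  (forall mu, in_Delta n mu -> exists lam, in_Delta n lam /\
     forall i, (i < n)%nat -> g i (lam i) = mu i).

Definition WNQ {F E : TVS} (X : F -> Prop) (T : F -> E -> Prop) : Prop :=
  forall (n : nat) (x : nat -> F),
    (forall i, (i < n)%nat -> X (x i)) ->
    (forall i j, (i < n)%nat -> (j < n)%nat -> x i = x j -> i = j) ->
    exists (y : nat -> E) (g : nat -> R -> R),
      (forall i, (i < n)%nat -> T (x i) (y i)) /\
      admissible_g n g /\
      (forall lam, in_Delta n lam ->
         T (vsum n (fun i => tscal (lam i) (x i)))
           (vsum n (fun i => tscal (g i (lam i)) (y i)))).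

Definition continuous_on {F E : TVS} (K : F -> Prop) (f : F -> E) : Prop :=
  forall x, K x -> forall U : E -> Prop, topen U -> U (f x) ->
    exists V : F -> Prop, topen V /\ V x /\ forall z, K z -> V z -> U (f z).

From Stdlib Require Import Reals Lra Lia Classical ClassicalEpsilon.
Open Scope R_scope.

(* Let K be the convex hull of affinely independent points v_0, ..., v_{n-1}.
   Applying the WNQ property to the vertices gives points y_i in T(v_i) and
   reparametrisations g_i of [0,1] such that  sum_i g_i(lam_i) y_i  lies in
   T(sum_i lam_i v_i)  for every lam in the standard simplex.  Hence
       f(x) = sum_i g_i(b_i(x)) y_i,   b(x) = barycentric coordinates of x,
   is a selection of T, and the whole difficulty is its continuity.  The map
   lam |-> sum_i g_i(lam_i) y_i is continuous by the axioms of a topological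
   vector space and continuity of the g_i.  The barycentric map b is the inverse
   of the continuous injection lam |-> sum_i lam_i v_i from the compact standard
   simplex into a Hausdorff space; we prove its continuity directly, using a
   Heine-Borel type principle for the cube [0,1]^n (a property of sets that is
   closed under subsets and binary unions and holds near every point of the
   cube holds for the cube) together with Hausdorff separation. *)

Section VectorAlgebra.
Variable V : TVS.

Lemma tadd_0r (x : V) : tadd x tzero = x.
Proof. rewrite tadd_comm. apply tadd_0. Qed.

Lemma tadd_cancel (a b c : V) : tadd a c = tadd b c -> a = b.
Proof.
  intro H.
  assert (undo : forall u : V, tadd (tadd u c) (topp c) = u).
  { intro u. rewrite <- tadd_assoc, (tadd_comm _ c (topp c)), tadd_opp. apply tadd_0r. }
  rewrite <- (undo a), <- (undo b), H. reflexivity.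
Qed.

Lemma tscal_0 (x : V) : tscal 0 x = tzero.
Proof.
  apply (tadd_cancel _ _ (tscal 0 x)). rewrite tadd_0, <- tscal_distr_s.
  f_equal. lra.
Qed.

Lemma tadd_swap (a b c d : V) : tadd (tadd a b) (tadd c d) = tadd (tadd a c) (tadd b d).
Proof.
  rewrite <- !tadd_assoc. f_equal. rewrite !tadd_assoc. f_equal. apply tadd_comm.
Qed.

Lemma vsum_ext n (u w : nat -> V) :
  (forall i, (i < n)%nat -> u i = w i) -> vsum n u = vsum n w.
Proof.
  induction n as [|n IH]; intro H; simpl; auto.
  rewrite IH by (intros; apply H; lia). rewrite H by lia. reflexivity.
Qed.

Lemma vsum_add n (u w : nat -> V) :
  vsum n (fun i => tadd (u i) (w i)) = tadd (vsum n u) (vsum n w).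
Proof.
  induction n as [|n IH]; simpl.
  - now rewrite tadd_0.
  - rewrite IH. apply tadd_swap.
Qed.
End VectorAlgebra.

Lemma sumR_minus n (a b : nat -> R) : sumR n (fun i => a i - b i) = sumR n a - sumR n b.
Proof. induction n; simpl; lra. Qed.

Lemma sumR_bound n (a b : nat -> R) d :
  (forall i, (i < n)%nat -> Rabs (b i - a i) < d) ->
  Rabs (sumR n b - sumR n a) <= INR n * d.
Proof.
  induction n as [|n IH]; intro H.
  - simpl. rewrite Rminus_0_r, Rabs_R0. lra.
  - rewrite S_INR. simpl sumR.
    replace (sumR n b + b n - (sumR n a + a n)) with ((sumR n b - sumR n a) + (b n - a n)) by ring.
    eapply Rle_trans; [apply Rabs_triang|].
    specialize (IH (fun i Hi => H i ltac:(lia))). specialize (H n ltac:(lia)). lra.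
Qed.

Lemma sumR_nonneg n (a : nat -> R) : (forall i, (i < n)%nat -> 0 <= a i) -> 0 <= sumR n a.
Proof.
  induction n as [|n IH]; intro H; simpl; [lra|].
  assert (0 <= a n) by (apply H; lia).
  assert (0 <= sumR n a) by (apply IH; intros; apply H; lia). lra.
Qed.

Lemma sumR_ge n (a : nat -> R) : (forall i, (i < n)%nat -> 0 <= a i) ->
  forall i, (i < n)%nat -> a i <= sumR n a.
Proof.
  induction n as [|n IH]; intros H i Hi; [lia|]. simpl.
  assert (0 <= sumR n a) by (apply sumR_nonneg; intros; apply H; lia).
  assert (0 <= a n) by (apply H; lia).
  destruct (Nat.eq_dec i n) as [->|hne]; [lra|].
  assert (a i <= sumR n a) by (apply IH; [intros; apply H; lia | lia]). lra.
Qed.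

Definition delta (i : nat) : nat -> R := fun j => if Nat.eqb j i then 1 else 0.

Lemma sumR_delta n i : (i < n)%nat -> sumR n (delta i) = 1.
Proof.
  assert (below : forall k, (k <= i)%nat -> sumR k (delta i) = 0).
  { induction k as [|k IH]; intro Hk; simpl; auto.
    rewrite IH by lia. unfold delta. destruct (Nat.eqb_spec k i); [lia|lra]. }
  induction n as [|n IH]; intro Hi; [lia|]. simpl. unfold delta at 2.
  destruct (Nat.eqb_spec n i) as [->|hne].
  - rewrite below by lia. lra.
  - rewrite IH by lia. lra.
Qed.

Lemma vsum_delta (V : TVS) n (v : nat -> V) i : (i < n)%nat ->
  vsum n (fun j => tscal (delta i j) (v j)) = v i.
Proof.
  assert (below : forall k, (k <= i)%nat -> vsum k (fun j => tscal (delta i j) (v j)) = tzero).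
  { induction k as [|k IH]; intro Hk; simpl; auto.
    rewrite IH by lia. unfold delta. destruct (Nat.eqb_spec k i); [lia|].
    rewrite tscal_0. apply tadd_0. }
  induction n as [|n IH]; intro Hi; [lia|]. simpl. unfold delta at 2.
  destruct (Nat.eqb_spec n i) as [->|hne].
  - rewrite below by lia. rewrite tscal_1. apply tadd_0.
  - rewrite IH by lia. rewrite tscal_0. apply tadd_0r.
Qed.

(* The map lam |-> sum_i lam_i v_i; on the standard simplex its inverse gives
   barycentric coordinates. *)
Definition phi {V : TVS} n (v : nat -> V) (lam : nat -> R) : V :=
  vsum n (fun i => tscal (lam i) (v i)).

Lemma phi_cont (V : TVS) n (w : nat -> V) (a : nat -> R) (U : V -> Prop) :
  topen U -> U (phi n w a) ->
  exists d, 0 < d /\ forall b, (forall i, (i < n)%nat -> Rabs (b i - a i) < d) ->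
    U (phi n w b).
Proof.
  unfold phi. revert U; induction n as [|n IH]; intros U hU hUa; simpl in *.
  - exists 1. split; [lra|auto].
  - destruct (tadd_cont V _ _ U hU hUa) as [U1 [U2 [hU1 [hU2 [h1 [h2 hsum]]]]]].
    destruct (IH U1 hU1 h1) as [d1 [hd1 hb1]].
    destruct (tscal_cont V _ _ U2 hU2 h2) as [e [he [W [hW [hwW hscal]]]]].
    exists (Rmin d1 e). split; [apply Rmin_pos; auto|].
    intros b hb. apply hsum.
    + apply hb1. intros i Hi. eapply Rlt_le_trans; [apply hb; lia | apply Rmin_l].
    + apply hscal; auto. eapply Rlt_le_trans; [apply hb; lia | apply Rmin_r].
Qed.

Lemma family_cont n (g : nat -> R -> R) (l0 : nat -> R) :
  (forall i, (i < n)%nat -> cont_on_01 (g i)) -> (forall i, (i < n)%nat -> 0 <= l0 i <= 1) ->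
  forall d, 0 < d -> exists e, 0 < e /\
    forall mu, (forall i, (i < n)%nat -> 0 <= mu i <= 1) ->
    (forall i, (i < n)%nat -> Rabs (mu i - l0 i) < e) ->
    forall i, (i < n)%nat -> Rabs (g i (mu i) - g i (l0 i)) < d.
Proof.
  induction n as [|n IH]; intros hc hl d hd.
  - exists 1. split; [lra|]. intros. lia.
  - destruct (IH (fun i Hi => hc i ltac:(lia)) (fun i Hi => hl i ltac:(lia)) d hd)
      as [e1 [he1 H1]].
    destruct (hc n ltac:(lia) (l0 n) (hl n ltac:(lia)) d hd) as [e2 [he2 H2]].
    exists (Rmin e1 e2). split; [apply Rmin_pos; auto|].
    intros mu hmu hclose i Hi.
    destruct (Nat.eq_dec i n) as [->|hne].
    + apply H2; [apply hmu; lia|].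
      eapply Rlt_le_trans; [apply hclose; lia | apply Rmin_r].
    + apply H1; try lia; [intros; apply hmu; lia|].
      intros j Hj. eapply Rlt_le_trans; [apply hclose; lia | apply Rmin_l].
Qed.

(* Heine-Borel for [0,1], in the form of a covering principle: a property of sets
   that passes to subsets and to binary unions, and holds on a neighbourhood of
   each point of [0,1], holds for [0,1].  Proof: the supremum m of the s for which
   it holds on [0,s] is 1. *)
Lemma covering_01 (H : (R -> Prop) -> Prop) :
  (forall A B, (forall z, A z -> B z) -> H B -> H A) ->
  (forall A B, H A -> H B -> H (fun z => A z \/ B z)) ->
  (forall t, 0 <= t <= 1 -> exists d, 0 < d /\ H (fun s => Rabs (s - t) < d)) ->
  H (fun s => 0 <= s <= 1).
Proof.
  intros hmono hunion hloc.
  set (good := fun s => 0 <= s <= 1 /\ H (fun r => 0 <= r <= s)).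
  assert (good0 : good 0).
  { split; [lra|]. destruct (hloc 0 ltac:(lra)) as [d [hd Hd]].
    eapply hmono; [|exact Hd]. intros z hz. replace z with 0 by lra.
    rewrite Rminus_0_r, Rabs_R0. exact hd. }
  destruct (completeness good) as [m [hub hlub]].
  { exists 1. intros x [hx _]. lra. }
  { exists 0. exact good0. }
  assert (hm0 : 0 <= m) by (apply hub; exact good0).
  assert (hm1 : m <= 1) by (apply hlub; intros x [hx _]; lra).
  destruct (hloc m ltac:(lra)) as [d [hd Hd]].
  assert (near_sup : exists s, good s /\ m - d < s).
  { apply NNPP. intro hn. assert (m <= m - d); [|lra].
    apply hlub. intros x hx. apply Rnot_lt_le. intro hlt. apply hn. exists x. auto. }
  destruct near_sup as [s [[hs01 Hs] hsd]].
  set (s' := Rmin 1 (m + d / 2)).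
  assert (hs' : s' <= m + d / 2) by apply Rmin_r.
  assert (good_s' : good s').
  { split; [unfold s', Rmin; destruct (Rle_dec 1 (m + d/2)); lra|].
    eapply hmono; [| apply (hunion _ _ Hs Hd)].
    intros r [hr0 hr1]. destruct (Rle_dec r s); [left; lra | right].
    assert (s <= m) by (apply hub; split; auto).
    unfold Rabs; destruct (Rcase_abs (r - m)); lra. }
  assert (s' <= m) by (apply hub; exact good_s').
  destruct good_s' as [_ Hs'].
  unfold s', Rmin in *. destruct (Rle_dec 1 (m + d/2)); [exact Hs' | lra].
Qed.

Definition cube m (z : nat -> R) : Prop := forall i, (i < m)%nat -> 0 <= z i <= 1.
Definition ball m (c : nat -> R) d (z : nat -> R) : Prop :=
  forall i, (i < m)%nat -> Rabs (z i - c i) < d.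

(* The covering principle for the cube [0,1]^m, by induction on m: the
   principle for [0,1] is applied to the property "holds on the slab of the cube
   whose last coordinate lies in A", whose local hypothesis is the induction
   hypothesis applied to thin slabs around a given last coordinate t. *)
Lemma covering_cube m (G : ((nat -> R) -> Prop) -> Prop) :
  (forall A B, (forall z, A z -> B z) -> G B -> G A) ->
  (forall A B, G A -> G B -> G (fun z => A z \/ B z)) ->
  (forall c, cube m c -> exists d, 0 < d /\ G (ball m c d)) ->
  G (cube m).
Proof.
  revert G; induction m as [|m IH]; intros G hmono hunion hloc.
  - destruct (hloc (fun _ => 0)) as [d [hd Hd]]; [intros i Hi; lia|].
    eapply hmono; [|exact Hd]. intros z _ i Hi. lia.
  - set (slab := fun A : R -> Prop => G (fun z => cube m z /\ A (z m))).
    assert (thin_slab : forall t, 0 <= t <= 1 ->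
              exists d, 0 < d /\ slab (fun s => Rabs (s - t) < d)).
    { intros t ht.
      set (G' := fun B : (nat -> R) -> Prop =>
                   exists d, 0 < d /\ G (fun z => B z /\ Rabs (z m - t) < d)).
      assert (HG' : G' (cube m)).
      { apply IH.
        - intros A B hAB [d [hd HB]]. exists d. split; auto.
          eapply hmono; [|exact HB]. intros z [h1 h2]; auto.
        - intros A B [d1 [hd1 HA]] [d2 [hd2 HB]]. exists (Rmin d1 d2).
          split; [apply Rmin_pos; auto|].
          eapply hmono; [|exact (hunion _ _ HA HB)].
          intros z [[h1|h1] h2]; [left|right]; split; auto;
            eapply Rlt_le_trans; eauto; [apply Rmin_l | apply Rmin_r].
        - intros c hc.
          set (c' := fun i => if Nat.eqb i m then t else c i).
          destruct (hloc c') as [d [hd Hd]].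
          { intros i Hi. unfold c'. destruct (Nat.eqb_spec i m); [lra|apply hc; lia]. }
          exists d. split; auto. exists d. split; auto. eapply hmono; [|exact Hd].
          intros z [h1 h2] i Hi. unfold c'.
          destruct (Nat.eqb_spec i m) as [->|]; auto. apply h1. lia. }
      destruct HG' as [d [hd Hd]]. exists d. split; auto. }
    assert (whole : slab (fun s => 0 <= s <= 1)).
    { apply covering_01; auto.
      - intros A B hAB HB. eapply hmono; [|exact HB]. intros z [h1 h2]; auto.
      - intros A B HA HB. eapply hmono; [|exact (hunion _ _ HA HB)].
        intros z [h1 [h2|h2]]; auto. }
    eapply hmono; [|exact whole]. intros z hz.
    split; [intros i Hi; apply hz; lia | apply hz; lia].
Qed.

Lemma in_Delta_cube n lam : in_Delta n lam -> cube n lam.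
Proof. intros [hnn hs] i Hi. split; auto. rewrite <- hs. apply sumR_ge; auto. Qed.

Lemma phi_inj (V : TVS) n (v : nat -> V) : aff_indep n v ->
  forall lam mu, in_Delta n lam -> in_Delta n mu -> phi n v lam = phi n v mu ->
  forall i, (i < n)%nat -> lam i = mu i.
Proof.
  intros hai lam mu [_ hl] [_ hm] heq i Hi.
  cut (lam i - mu i = 0); [lra|]. apply (hai (fun j => lam j - mu j)); auto.
  - rewrite sumR_minus. lra.
  - apply (tadd_cancel V _ _ (phi n v mu)). rewrite tadd_0.
    unfold phi in *. rewrite <- vsum_add, <- heq. apply vsum_ext.
    intros j Hj. rewrite <- tscal_distr_s. f_equal. ring.
Qed.

(* Continuity of barycentric
   coordinates at phi l0 says that the whole cube is controlled. *)
Definition controlled {V : TVS} n (v : nat -> V) (l0 : nat -> R) eps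
    (B : (nat -> R) -> Prop) : Prop :=
  exists W : V -> Prop, topen W /\ W (phi n v l0) /\
    forall mu, B mu -> in_Delta n mu -> W (phi n v mu) ->
      forall i, (i < n)%nat -> Rabs (mu i - l0 i) < eps.

Lemma ball_off_simplex n c : sumR n c <> 1 ->
  exists d, 0 < d /\ forall mu, ball n c d mu -> ~ in_Delta n mu.
Proof.
  intro hs.
  set (d := Rabs (sumR n c - 1) / (INR n + 1)).
  assert (hpos : 0 < Rabs (sumR n c - 1)) by (apply Rabs_pos_lt; lra).
  assert (hn0 : 0 <= INR n) by apply pos_INR.
  assert (hd : 0 < d) by (unfold d; apply Rdiv_lt_0_compat; lra).
  assert (small : INR n * d < Rabs (sumR n c - 1)).
  { unfold d. apply (Rmult_lt_reg_r (INR n + 1)); [lra|].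
    unfold Rdiv. rewrite Rmult_assoc, (Rmult_assoc (Rabs _)), Rinv_l by lra. nra. }
  exists d. split; auto. intros mu hmu [_ hsum].
  assert (hb := sumR_bound n c mu d hmu). rewrite hsum, Rabs_minus_sym in hb. lra.
Qed.

(* Near a point c of the simplex with phi c <> phi l0, Hausdorff separation of
   phi c and phi l0 and continuity of phi control a ball around c. *)
Lemma controlled_far (V : TVS) n (v : nat -> V) l0 eps c i : aff_indep n v ->
  in_Delta n l0 -> in_Delta n c -> (i < n)%nat -> c i <> l0 i ->
  exists d, 0 < d /\ controlled n v l0 eps (ball n c d).
Proof.
  intros hai hl0 hc Hi hci.
  assert (hne : phi n v c <> phi n v l0).
  { intro heq. apply hci. apply (phi_inj V n v hai); auto. }
  destruct (thausdorff V _ _ hne) as [U [W [hU [hW [hUc [hWl hdis]]]]]].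
  destruct (phi_cont V n v c U hU hUc) as [d [hd Hd]].
  exists d. split; auto. exists W. split; [auto|split; auto].
  intros mu hmu _ hWmu. exfalso. apply (hdis (phi n v mu)). split; auto.
Qed.

Lemma controlled_local (V : TVS) n (v : nat -> V) l0 eps : aff_indep n v ->
  in_Delta n l0 -> 0 < eps ->
  forall c, cube n c -> exists d, 0 < d /\ controlled n v l0 eps (ball n c d).
Proof.
  intros hai hl0 heps c hc.
  destruct (classic (exists i, (i < n)%nat /\ eps / 2 <= Rabs (c i - l0 i)))
    as [[i [Hi hfar]] | hnear].
  - destruct (classic (in_Delta n c)) as [hD | hnD].
    + apply (controlled_far V n v l0 eps c i); auto.
      intro heq. rewrite heq, Rminus_diag, Rabs_R0 in hfar. lra.
    + destruct (ball_off_simplex n c) as [d [hd Hd]].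
      { intro hs. apply hnD. split; auto. intros j Hj. apply hc; auto. }
      exists d. split; auto. exists (fun _ => True). split; [apply topen_full|split; auto].
      intros mu hmu hD. exfalso. exact (Hd mu hmu hD).
  - exists (eps / 2). split; [lra|].
    exists (fun _ => True). split; [apply topen_full|split; auto].
    intros mu hmu _ _ i Hi.
    assert (Rabs (c i - l0 i) < eps / 2).
    { apply Rnot_le_lt. intro h. apply hnear. exists i. auto. }
    specialize (hmu i Hi).
    replace (mu i - l0 i) with ((mu i - c i) + (c i - l0 i)) by ring.
    eapply Rle_lt_trans; [apply Rabs_triang | lra].
Qed.

Lemma phi_inverse_cont (V : TVS) n (v : nat -> V) : aff_indep n v ->
  forall l0, in_Delta n l0 -> forall eps, 0 < eps ->
  exists W, topen W /\ W (phi n v l0) /\ forall mu, in_Delta n mu -> W (phi n v mu) ->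
    forall i, (i < n)%nat -> Rabs (mu i - l0 i) < eps.
Proof.
  intros hai l0 hl0 eps heps.
  assert (whole : controlled n v l0 eps (cube n)).
  { apply covering_cube.
    - intros A B hAB [W [h1 [h2 h3]]]. exists W. split; auto.
    - intros A B [W1 [h1 [h2 h3]]] [W2 [h4 [h5 h6]]].
      exists (fun x => W1 x /\ W2 x). split; [apply topen_inter; auto|split; auto].
      intros mu [hA|hB] hD [hw1 hw2]; eauto.
    - apply controlled_local; auto. }
  destruct whole as [W [hW [hWl hctl]]]. exists W. split; [auto|split; auto].
  intros mu hmu. apply hctl; auto. apply in_Delta_cube; auto.
Qed.

Definition bary {V : TVS} n (v : nat -> V) (x : V) : nat -> R :=
  epsilon (inhabits (fun _ : nat => 0)) (fun lam => in_Delta n lam /\ x = phi n v lam).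

Section Simplex.
Variables (F : TVS) (K : F -> Prop) (n : nat) (v : nat -> F).
Hypothesis hK : forall x, K x <-> exists lam, in_Delta n lam /\ x = phi n v lam.

Lemma vertex_in_simplex i : (i < n)%nat -> K (v i).
Proof.
  intro Hi. apply hK. exists (delta i). split.
  - split; [intros j _; unfold delta; destruct (Nat.eqb j i); lra | apply sumR_delta; auto].
  - symmetry. apply vsum_delta; auto.
Qed.

Lemma bary_spec x : K x -> in_Delta n (bary n v x) /\ x = phi n v (bary n v x).
Proof. intro hx. unfold bary. apply epsilon_spec, hK, hx. Qed.

Lemma reparam_comb_cont (E : TVS) (y : nat -> E) (g : nat -> R -> R) :
  aff_indep n v -> (forall i, (i < n)%nat -> cont_on_01 (g i)) ->
  continuous_on K (fun x => phi n y (fun i => g i (bary n v x i))).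
Proof.
  intros hai hg x0 hx0 U hU hUf.
  destruct (bary_spec x0 hx0) as [hD0 hx0e].
  destruct (phi_cont E n y _ U hU hUf) as [d [hd Hd]].
  destruct (family_cont n g (bary n v x0) hg (in_Delta_cube _ _ hD0) d hd) as [e [he He]].
  destruct (phi_inverse_cont F n v hai _ hD0 e he) as [W [hW [hWx hWc]]].
  exists W. split; [auto|split; [rewrite hx0e at 1; auto|]].
  intros z hz hWz. destruct (bary_spec z hz) as [hDz hze].
  apply Hd. intros i Hi. apply He; auto; [apply in_Delta_cube; auto|].
  apply hWc; auto. rewrite <- hze. auto.
Qed.
End Simplex.

Theorem theorem3 (F E : TVS) (K : F -> Prop) (Y : E -> Prop) (T : F -> E -> Prop)
  (hK : is_simplex K)
  (hYne : exists y, Y y) (hYconv : convex Y)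
  (hTY : forall x y, K x -> T x y -> Y y)
  (hT : WNQ K T) :
  exists f : F -> E, continuous_on K f /\
    (forall x, K x -> Y (f x) /\ T x (f x)).
Proof.
  destruct hK as [n [v [hvinj [hai hKiff]]]].
  destruct (hT n v (vertex_in_simplex F K n v hKiff) hvinj) as [y [g [hy [hg hTg]]]].
  exists (fun x => phi n y (fun i => g i (bary n v x i))). split.
  - apply reparam_comb_cont; auto. intros i Hi. apply (proj1 hg i Hi).
  - intros x hx. destruct (bary_spec F K n v hKiff x hx) as [hD hxe].
    assert (hTx : T x (phi n y (fun i => g i (bary n v x i)))).
    { rewrite hxe at 1. apply hTg, hD. }
    split; [eapply hTY; eauto | exact hTx].
Qed.
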